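(* Let $\mu>0$ and let $X$ have the skew-symmetric-Laplace-uniform density with parameter $\mu$ (defined in the context). For $a\in\mathbb{R}$, the mean deviation $\eta_a=E|X-a|$ is $$\eta_a=\begin{cases} -\left(1+\frac{2}{\mu}\right)e^{-\mu}+\left(\frac{2}{\mu}-a\right) & a<-\mu,\\[2pt] \frac{a}{\mu}e^{-\mu}+\left(\frac{a}{\mu}-\frac{2}{\mu}+1\right)e^{a}+\left(\frac{2}{\mu}-a\right) & -\mu\le a<0,\\[2pt] \frac{a}{\mu}e^{-\mu}+\left(\frac{a}{\mu}+\frac{2}{\mu}+1\right)e^{-a}+\left(a-\frac{2}{\mu}\right) & 0\le a<\mu,\\[2pt] \left(1+\frac{2}{\mu}\right)e^{-\mu}+2e^{-a}+\left(a-\frac{2}{\mu}\right) & a\ge\mu.\end{cases}$$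
   Context: For $\mu\in\mathbb{R}\setminus\{0\}$, the skew-symmetric-Laplace-uniform distribution $SSLUD(\mu)$ is the distribution on $\mathbb{R}$ with density $$g(x)=\begin{cases} 0 & \text{if } x/\mu<-1,\\ e^{-|x|}\left(\dfrac{x}{2\mu}+\dfrac12\right) & \text{if } -1\le x/\mu<1,\\ e^{-|x|} & \text{if } x/\mu\ge 1.\end{cases}$$ *)

From HB Require Import structures.
From mathcomp Require Import all_boot all_order all_algebra.
From mathcomp Require Import all_classical all_reals all_analysis.
Set Implicit Arguments. Unset Strict Implicit. Unset Printing Implicit Defensive.
Import Order.TTheory GRing.Theory Num.Theory.
Local Open Scope ring_scope.

Definition sslud_pdf (R : realType) (mu x : R) : R :=
  if x / mu < -1 then 0
  else if x / mu < 1 then expR (- `|x|) * (x / (2 * mu) + 1 / 2)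
  else expR (- `|x|).

Definition sslud_mean_dev (R : realType) (mu a : R) : \bar R :=
  (\int[@lebesgue_measure R]_(x in [set: R]) (`|x - a| * sslud_pdf mu x)%:E)%E.

From HB Require Import structures.
From mathcomp Require Import all_boot all_order all_algebra.
From mathcomp Require Import all_classical all_reals all_analysis.
From mathcomp Require Import ring lra measurable_realfun.
Import Order.TTheory GRing.Theory Num.Theory.
Import numFieldNormedType.Exports.
Local Open Scope ring_scope.
Local Open Scope classical_set_scope.

(* The density is e^(-|x|) F(x), where F is the distribution function of the
   uniform law on [-mu, mu]. Hence |x - a| g(x) vanishes left of -mu, and on
   each interval cut out of [-mu, +oo[ by 0, mu and a it equals e^(+-x) times
   a polynomial of degree at most 2, which has the explicit primitive e^(+-x)
   times another such polynomial; the unbounded piece is e^(-x) (x - a).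
   Summing the increments of these primitives gives the four formulas. *)

Section expR_quadratic_integrals.
Context {R : realType}.
Local Notation leb := (@lebesgue_measure R).

Lemma is_derive_continuous (f : R -> R) (x df : R) :
  is_derive x 1 f df -> {for x, continuous f}.
Proof.
by case=> fx _; apply/differentiable_continuous/derivable1_diffP.
Qed.

Lemma integral_itv_cc_primitive (F f : R -> R) (p r : R) :
  (forall x : R, is_derive x 1 F (f x)) -> continuous f -> p <= r ->
  (\int[leb]_(x in `[p, r]) (f x)%:E = (F r - F p)%:E)%E.
Proof.
move=> dF cf; rewrite le_eqVlt => /predU1P[<-|pr].
  by rewrite set_itv1 integral_set1 subrr.
rewrite EFinB; apply: continuous_FTC2 => //.
- exact: continuous_subspaceT.
- split; first by move=> x _; have [] := dF x.
  + apply/cvg_at_right_filter; exact: is_derive_continuous (dF p).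
  + apply/cvg_at_left_filter; exact: is_derive_continuous (dF r).
- by move=> x _; rewrite derive1E; exact: (@derive_val _ _ _ _ _ _ _ (dF x)).
Qed.

Definition expR_quad_prim (al be ga x : R) :=
  expR x * (al * x ^+ 2 + (be - 2 * al) * x + (ga - be + 2 * al)).

Definition expRN_quad_prim (al be ga x : R) :=
  - (expR (- x) * (al * x ^+ 2 + (be + 2 * al) * x + (ga + be + 2 * al))).

Lemma is_derive_expR_quad_prim (al be ga x : R) :
  is_derive x 1 (expR_quad_prim al be ga) (expR x * (al * x ^+ 2 + be * x + ga)).
Proof. by apply: is_derive_eq; rewrite /GRing.scale /=; ring. Qed.

Lemma is_derive_expRN_quad_prim (al be ga x : R) :
  is_derive x 1 (expRN_quad_prim al be ga)
    (expR (- x) * (al * x ^+ 2 + be * x + ga)).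
Proof. by apply: is_derive_eq; rewrite /GRing.scale /=; ring. Qed.

Lemma integral_expR_quad (al be ga p r : R) : p <= r ->
  (\int[leb]_(x in `[p, r]) (expR x * (al * x ^+ 2 + be * x + ga))%:E =
   (expR_quad_prim al be ga r - expR_quad_prim al be ga p)%:E)%E.
Proof.
apply: integral_itv_cc_primitive => [x|x].
  exact: is_derive_expR_quad_prim.
exact: is_derive_continuous.
Qed.

Lemma integral_expRN_quad (al be ga p r : R) : p <= r ->
  (\int[leb]_(x in `[p, r]) (expR (- x) * (al * x ^+ 2 + be * x + ga))%:E =
   (expRN_quad_prim al be ga r - expRN_quad_prim al be ga p)%:E)%E.
Proof.
apply: integral_itv_cc_primitive => [x|x].
  exact: is_derive_expRN_quad_prim.
exact: is_derive_continuous.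
Qed.

Lemma cvgr_mul_expRN : x * expR (- x) @[x --> +oo] --> (0 : R).
Proof.
apply/cvgrPdist_le => e e_gt0; near=> x.
have x_gt0 : 0 < x by near: x; apply: nbhs_pinfty_gt; rewrite num_real.
have ex_ge2 : 2 <= e * x.
  by rewrite -ler_pdivrMl//; near: x; apply: nbhs_pinfty_ge; rewrite num_real.
rewrite sub0r normrN ger0_norm ?mulr_ge0 ?expR_ge0 ?(ltW x_gt0)// expRN.
rewrite ler_pdivrMr ?expR_gt0//.
(* [1 + x^2/2 <= e^x] and [2 <= e x] give [x <= e e^x] *)
have : 1 + x ^+ 2 / 2 <= expR x.
  by have := expR_ge1Dxn 1 (ltW x_gt0); rewrite factS /= expr2.
move: (expR x) (expR_gt0 x) => E E_gt0; nra.
Unshelve. all: by end_near. Qed.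

Lemma integral_expRN_lin_tail (a p : R) : a <= p ->
  (\int[leb]_(x in `[p, +oo[) (expR (- x) * (x - a))%:E =
   (expR (- p) * (p - a + 1))%:E)%E.
Proof.
move=> ap; set F := expRN_quad_prim 0 1 (- a).
have dF (x : R) : is_derive x 1 F (expR (- x) * (x - a)).
  by apply: is_derive_eq; rewrite /GRing.scale /=; ring.
rewrite (@ge0_continuous_FTC2y _ _ F _ 0).
- by rewrite /F /expRN_quad_prim; congr EFin; ring.
- by move=> x px; rewrite mulr_ge0 ?expR_ge0// subr_ge0 (le_trans ap).
- by apply/continuous_subspaceT => x; apply: is_derive_continuous.
- have -> : F = fun x => - (x * expR (- x)) + (a - 1) * expR (- x).
    by apply/funext => x; rewrite /F /expRN_quad_prim; ring.
  rewrite (_ : 0 = - 0 + (a - 1) * 0); last by rewrite oppr0 mulr0 addr0.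
  apply: cvgD; first exact: cvgN cvgr_mul_expRN.
  by apply: cvgM; [exact: cvg_cst | exact: cvgr_expR].
- by move=> x _; have [] := dF x.
- apply/cvg_at_right_filter; exact: is_derive_continuous (dF p).
- by move=> x _; rewrite derive1E; exact: (@derive_val _ _ _ _ _ _ _ (dF x)).
Qed.

Lemma ge0_integral_itv_split (f : R -> R) (p q : R) (b : itv_bound R) :
  measurable_fun [set: R] f -> (forall x, 0 <= f x) ->
  p <= q -> (BRight q <= b)%O ->
  (\int[leb]_(x in [set` Interval (BLeft p) b]) (f x)%:E =
   \int[leb]_(x in `[p, q]) (f x)%:E +
   \int[leb]_(x in [set` Interval (BLeft q) b]) (f x)%:E)%E.
Proof.
move=> /measurable_EFinP mf f_ge0 pq qb.
rewrite (@itv_bndbnd_setU _ _ _ (BRight q)) ?bnd_simp//.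
rewrite ge0_integral_setU//=.
- by rewrite integral_itv_obnd_cbnd//; exact: measurable_funS mf.
- exact: measurable_funS mf.
- by move=> x _; rewrite lee_fin.
- apply/disj_setPS => x [/=]; rewrite !in_itv/= => /andP[_ xq] /andP[qx _].
  by rewrite ltNge xq in qx.
Qed.

End expR_quadratic_integrals.

Section sslud_mean_deviation.
Variables (R : realType) (mu a : R).
Hypothesis mu_gt0 : 0 < mu.
Local Notation leb := (@lebesgue_measure R).

Let mu_neq0 : mu != 0. Proof. by rewrite gt_eqF. Qed.

Let unif_cdf (x : R) := Num.min (Num.max ((x / mu + 1) / 2) 0) 1.

Lemma sslud_pdfE x : sslud_pdf mu x = expR (- `|x|) * unif_cdf x.
Proof.
rewrite /sslud_pdf /unif_cdf.
case: ifPn => [|]; rewrite -?leNgt => hlo.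
  by rewrite max_r ?min_l ?mulr0 //; lra.
case: ifPn => [|]; rewrite -?leNgt => hhi.
  by rewrite max_l ?min_l; [congr (_ * _); field | lra | lra].
by rewrite max_l ?min_r ?mulr1; lra.
Qed.

Lemma unif_cdf_lo x : x <= - mu -> unif_cdf x = 0.
Proof.
move=> x_le; have xmu_le : x / mu <= -1 by rewrite ler_pdivrMr//; lra.
by rewrite /unif_cdf max_r ?min_l//; lra.
Qed.

Lemma unif_cdf_mid x : - mu <= x -> x <= mu -> unif_cdf x = x / (2 * mu) + 1 / 2.
Proof.
move=> x_ge x_le; have xmu_ge : -1 <= x / mu by rewrite ler_pdivlMr//; lra.
have xmu_le : x / mu <= 1 by rewrite ler_pdivrMr//; lra.
by rewrite /unif_cdf max_l ?min_l; [field | lra | lra].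
Qed.

Lemma unif_cdf_hi x : mu <= x -> unif_cdf x = 1.
Proof.
move=> x_ge; have xmu_ge : 1 <= x / mu by rewrite ler_pdivlMr//; lra.
by rewrite /unif_cdf max_l ?min_r//; lra.
Qed.

Lemma continuous_sslud_pdf : continuous (sslud_pdf mu).
Proof.
have -> : sslud_pdf mu = fun x => expR (- `|x|) * unif_cdf x.
  by apply/funext => x; rewrite sslud_pdfE.
move=> x; apply: cvgM.
  apply: (@cvg_comp _ _ _ (fun x => - `|x|) expR); last exact: continuous_expR.
  by apply: cvgN; apply: cvg_norm; exact: cvg_id.
have -> : unif_cdf = ((fun x => (x / mu + 1) / 2) \max cst 0) \min cst 1 by [].
apply: continuous_min; last exact: cvg_cst.
apply: continuous_max; last exact: cvg_cst.
exact: is_derive_continuous.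
Qed.

Lemma sslud_pdf_ge0 x : 0 <= sslud_pdf mu x.
Proof.
by rewrite sslud_pdfE mulr_ge0 ?expR_ge0// le_min ler01 le_max lexx orbT.
Qed.

Let mdev x := `|x - a| * sslud_pdf mu x.

Let measurable_mdev : measurable_fun [set: R] mdev.
Proof.
apply: continuous_measurable_fun => x.
apply: cvgM; last exact: continuous_sslud_pdf.
by apply: cvg_norm; apply: cvgB; [exact: cvg_id | exact: cvg_cst].
Qed.

Let mdev_ge0 x : 0 <= mdev x.
Proof. by rewrite mulr_ge0 ?sslud_pdf_ge0. Qed.

Lemma sslud_mean_dev_itv :
  sslud_mean_dev mu a = (\int[leb]_(x in `[(- mu)%R, +oo[) (mdev x)%:E)%E.
Proof.
have /measurable_EFinP mdevE := measurable_mdev.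
rewrite /sslud_mean_dev -(@itv_setU_setT _ _ true (- mu)) ge0_integral_setU//=.
- rewrite integral0_eq ?add0e// => x /=; rewrite in_itv/= => x_lt.
  by rewrite /mdev sslud_pdfE unif_cdf_lo ?mulr0 ?ltW.
- by rewrite (@itv_setU_setT _ _ true (- mu)).
- by move=> x _; rewrite lee_fin mdev_ge0.
- apply/disj_setPS => x [/=]; rewrite !in_itv/= => x_lt /andP[x_ge _].
  by rewrite ltNge x_ge in x_lt.
Qed.

Let integral_mdev_split p q : p <= q ->
  (\int[leb]_(x in `[p, +oo[) (mdev x)%:E =
   \int[leb]_(x in `[p, q]) (mdev x)%:E +
   \int[leb]_(x in `[q, +oo[) (mdev x)%:E)%E.
Proof. by move=> pq; apply: ge0_integral_itv_split. Qed.

Let Nmu_le0 : - mu <= 0. Proof. by rewrite oppr_le0 ltW. Qed.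
Let mu_ge0 : 0 <= mu. Proof. exact: ltW. Qed.

Lemma norm_sub_itv_ge {p} r : a <= p ->
  {in `[p, r], forall x, `|x - a| = 1 * (x - a)}.
Proof.
move=> ap x; rewrite inE/= in_itv/= mul1r => /andP[px _].
by rewrite ger0_norm// subr_ge0 (le_trans ap).
Qed.

Lemma norm_sub_itv_le p {r} : r <= a ->
  {in `[p, r], forall x, `|x - a| = -1 * (x - a)}.
Proof.
move=> ra x; rewrite inE/= in_itv/= mulN1r => /andP[_ xr].
by rewrite ler0_norm// subr_le0 (le_trans xr).
Qed.

(* Primitives of e^(+-x) s (x - a) (x / (2 mu) + 1 / 2), the integrand on
   [-mu, 0] and on [0, mu] when |x - a| = s (x - a). *)
Let left_prim s :=
  expR_quad_prim (s / (2 * mu)) (s * (mu - a) / (2 * mu)) (- (s * a) / 2).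
Let mid_prim s :=
  expRN_quad_prim (s / (2 * mu)) (s * (mu - a) / (2 * mu)) (- (s * a) / 2).

Lemma integral_mdev_left {p r s} :
  {in `[p, r], forall x, `|x - a| = s * (x - a)} ->
  - mu <= p -> p <= r -> r <= 0 ->
  (\int[leb]_(x in `[p, r]) (mdev x)%:E = (left_prim s r - left_prim s p)%:E)%E.
Proof.
move=> hs mup pr r0; rewrite -integral_expR_quad//; apply: eq_integral => x.
move=> xpr; rewrite /mdev (hs x xpr).
move: xpr; rewrite inE/= in_itv/= => /andP[px xr].
rewrite sslud_pdfE ler0_norm ?opprK ?unif_cdf_mid; [by congr EFin; field | lra..].
Qed.

Lemma integral_mdev_mid {p r s} :
  {in `[p, r], forall x, `|x - a| = s * (x - a)} ->
  0 <= p -> p <= r -> r <= mu ->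
  (\int[leb]_(x in `[p, r]) (mdev x)%:E = (mid_prim s r - mid_prim s p)%:E)%E.
Proof.
move=> hs p0 pr rmu; rewrite -integral_expRN_quad//; apply: eq_integral => x.
move=> xpr; rewrite /mdev (hs x xpr).
move: xpr; rewrite inE/= in_itv/= => /andP[px xr].
rewrite sslud_pdfE ger0_norm ?unif_cdf_mid; [by congr EFin; field | lra..].
Qed.

Lemma integral_mdev_right p r : mu <= p -> p <= r -> r <= a ->
  (\int[leb]_(x in `[p, r]) (mdev x)%:E =
   (expRN_quad_prim 0 (-1) a r - expRN_quad_prim 0 (-1) a p)%:E)%E.
Proof.
move=> mup pr ra; rewrite -integral_expRN_quad//; apply: eq_integral => x.
move=> xpr; rewrite /mdev (norm_sub_itv_le _ ra x xpr).
move: xpr; rewrite inE/= in_itv/= => /andP[/(le_trans mup) mux _].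
rewrite sslud_pdfE ger0_norm ?unif_cdf_hi ?(le_trans mu_ge0 mux)//.
by congr EFin; ring.
Qed.

Lemma integral_mdev_tail p : mu <= p -> a <= p ->
  (\int[leb]_(x in `[p, +oo[) (mdev x)%:E = (expR (- p) * (p - a + 1))%:E)%E.
Proof.
move=> mup ap; rewrite -integral_expRN_lin_tail//; apply: eq_integral => x.
rewrite inE/= in_itv/= andbT => px; have mux := le_trans mup px.
rewrite /mdev sslud_pdfE unif_cdf_hi// mulr1 (ger0_norm (le_trans mu_ge0 mux)).
by rewrite ger0_norm ?subr_ge0 ?(le_trans ap px)// mulrC.
Qed.

Lemma sslud_mean_dev_lt_Nmu : a < - mu ->
  sslud_mean_dev mu a = (- (1 + 2 / mu) * expR (- mu) + (2 / mu - a))%:E.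
Proof.
move=> /ltW a_le; have a_le0 := le_trans a_le Nmu_le0.
rewrite sslud_mean_dev_itv (integral_mdev_split _ _ Nmu_le0).
rewrite (integral_mdev_split _ _ mu_ge0).
rewrite (integral_mdev_left (norm_sub_itv_ge 0 a_le)) ?lexx//.
rewrite (integral_mdev_mid (norm_sub_itv_ge mu a_le0)) ?lexx//.
rewrite integral_mdev_tail ?lexx ?(le_trans a_le0 mu_ge0)//.
rewrite -!EFinD /left_prim /mid_prim /expR_quad_prim /expRN_quad_prim oppr0 expR0.
by congr EFin; field.
Qed.

Lemma sslud_mean_dev_Nmu_0 : - mu <= a -> a < 0 ->
  sslud_mean_dev mu a =
  (a / mu * expR (- mu) + (a / mu - 2 / mu + 1) * expR a + (2 / mu - a))%:E.
Proof.
move=> Nmu_le_a /ltW a_le0.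
rewrite sslud_mean_dev_itv (integral_mdev_split _ _ Nmu_le_a).
rewrite (integral_mdev_split _ _ a_le0) (integral_mdev_split _ _ mu_ge0).
rewrite (integral_mdev_left (norm_sub_itv_le (- mu) (lexx a))) ?lexx//.
rewrite (integral_mdev_left (norm_sub_itv_ge 0 (lexx a))) ?lexx//.
rewrite (integral_mdev_mid (norm_sub_itv_ge mu a_le0)) ?lexx//.
rewrite integral_mdev_tail ?lexx ?(le_trans a_le0 mu_ge0)//.
rewrite -!EFinD /left_prim /mid_prim /expR_quad_prim /expRN_quad_prim oppr0 expR0.
by congr EFin; field.
Qed.

Lemma sslud_mean_dev_0_mu : 0 <= a -> a < mu ->
  sslud_mean_dev mu a =
  (a / mu * expR (- mu) + (a / mu + 2 / mu + 1) * expR (- a) + (a - 2 / mu))%:E.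
Proof.
move=> a_ge0 /ltW a_le_mu.
rewrite sslud_mean_dev_itv (integral_mdev_split _ _ Nmu_le0).
rewrite (integral_mdev_split _ _ a_ge0) (integral_mdev_split _ _ a_le_mu).
rewrite (integral_mdev_left (norm_sub_itv_le (- mu) a_ge0)) ?lexx//.
rewrite (integral_mdev_mid (norm_sub_itv_le 0 (lexx a))) ?lexx//.
rewrite (integral_mdev_mid (norm_sub_itv_ge mu (lexx a))) ?lexx//.
rewrite integral_mdev_tail ?lexx//.
rewrite -!EFinD /left_prim /mid_prim /expR_quad_prim /expRN_quad_prim oppr0 expR0.
by congr EFin; field.
Qed.

Lemma sslud_mean_dev_ge_mu : mu <= a ->
  sslud_mean_dev mu a =
  ((1 + 2 / mu) * expR (- mu) + 2 * expR (- a) + (a - 2 / mu))%:E.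
Proof.
move=> mu_le_a; have a_ge0 := le_trans mu_ge0 mu_le_a.
rewrite sslud_mean_dev_itv (integral_mdev_split _ _ Nmu_le0).
rewrite (integral_mdev_split _ _ mu_ge0) (integral_mdev_split _ _ mu_le_a).
rewrite (integral_mdev_left (norm_sub_itv_le (- mu) a_ge0)) ?lexx//.
rewrite (integral_mdev_mid (norm_sub_itv_le 0 mu_le_a)) ?lexx//.
rewrite integral_mdev_right ?lexx// integral_mdev_tail ?lexx//.
rewrite -!EFinD /left_prim /mid_prim /expR_quad_prim /expRN_quad_prim oppr0 expR0.
by congr EFin; field.
Qed.

End sslud_mean_deviation.

Theorem mainTheorem7 (R : realType) (mu a : R) (hmu : 0 < mu) :
  sslud_mean_dev mu a =
  (if a < - mu then
     - (1 + 2 / mu) * expR (- mu) + (2 / mu - a)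
   else if a < 0 then
     a / mu * expR (- mu) + (a / mu - 2 / mu + 1) * expR a + (2 / mu - a)
   else if a < mu then
     a / mu * expR (- mu) + (a / mu + 2 / mu + 1) * expR (- a) + (a - 2 / mu)
   else
     (1 + 2 / mu) * expR (- mu) + 2 * expR (- a) + (a - 2 / mu))%:E.
Proof.
have [a_lt|Nmu_le_a] := ltP a (- mu); first exact: sslud_mean_dev_lt_Nmu.
have [a_lt0|a_ge0] := ltP a 0; first exact: sslud_mean_dev_Nmu_0.
have [a_lt_mu|mu_le_a] := ltP a mu; first exact: sslud_mean_dev_0_mu.
exact: sslud_mean_dev_ge_mu.
Qed.
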